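(* Let $N\ge1$, $\alpha>0$, $\tau_0\ge0$, let $c_1,\dots,c_N\in\mathbb{C}\setminus\{0\}$ and let $\mu_1,\dots,\mu_N\in\mathbb{C}$ be pairwise distinct. For $\lambda\in\mathbb{C}$ put $k_i:=\lambda+\mu_i$ and let $\mathcal{S}:=\{\lambda\in\mathbb{C}:k_i^2=k_j^2\text{ for some }i\neq j\}$. On $Y:=C([-1,1];\mathbb{C})$ define $(K_iq)(x):=\int_{-1}^1e^{-k_i|x-r|}q(r)\,dr$ and $$\Delta(\lambda)q:=(\lambda+\alpha)e^{\lambda\tau_0}q-\sum_{i=1}^Nc_iK_iq .$$ Let $\lambda\notin\mathcal{S}$. Then there exist unique vectors $\zeta=[\zeta_0,\dots,\zeta_{N-1}]\in\mathbb{C}^N$ and $\beta=[\beta_0,\dots,\beta_N]\in\mathbb{C}^{N+1}$, depending on $\lambda$, such that for every $q\in C^{2N}([-1,1];\mathbb{C})$ $$(\zeta_0+\zeta_1D_x^2+\dots+\zeta_{N-1}D_x^{2N-2}+D_x^{2N})\,\Delta(\lambda)q=(\beta_0+\beta_1D_x^2+\dots+\beta_{N-1}D_x^{2N-2}+\beta_ND_x^{2N})\,q$$ on $[-1,1]$.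
   Context: $D_x$ denotes differentiation with respect to $x\in[-1,1]$. The operator $\Delta(\lambda)$ is $e^{\lambda\tau_0}$ times the characteristic operator $q\mapsto(\lambda+\alpha)q(x)-\int_{-1}^1J(x,r)e^{-\lambda\tau_0-\lambda|x-r|}q(r)\,dr$ of the linearised neural field equation with connectivity $J(x,r)=\sum_ic_ie^{-\mu_i|x-r|}$ and delay $\tau(x,r)=\tau_0+|x-r|$. *)

From Stdlib Require Import Reals.
From Coquelicot Require Import Coquelicot.
Open Scope R_scope.

Definition I11 (x : R) : Prop := -1 <= x <= 1.

Definition Cexp (z : C) : C :=
  (exp (Re z) * cos (Im z), exp (Re z) * sin (Im z)).

Definition is_deriv_on_I (f g : R -> C) : Prop :=
  forall x, I11 x ->
    filterlim (fun y => Cmult (RtoC (/ (y - x))) (Cminus (f y) (f x)))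
      (within (fun y => I11 y /\ y <> x) (locally x)) (locally (g x)).

Definition cont_on_I (f : R -> C) : Prop :=
  forall x, I11 x -> filterlim f (within I11 (locally x)) (locally (f x)).

Definition deriv_chain (n : nat) (d : nat -> R -> C) : Prop :=
  forall j, (j < n)%nat -> is_deriv_on_I (d j) (d (S j)).

Definition Cn_on_I (n : nat) (q : R -> C) (d : nat -> R -> C) : Prop :=
  (forall x, I11 x -> d O x = q x) /\ deriv_chain n d /\ cont_on_I (d n).

Definition Kop (k : C) (q : R -> C) (x : R) : C :=
  @RInt C_R_CompleteNormedModule
    (fun r => Cmult (Cexp (Cmult (Copp k) (RtoC (Rabs (x - r))))) (q r)) (-1) 1.

Fixpoint Csum (n : nat) (f : nat -> C) : C :=
  match n with O => RtoC 0 | S m => Cplus (Csum m f) (f m) end.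

(* Delta(lambda) q = (lambda+alpha) e^{lambda tau0} q - sum_i c_i K_i q,
   with k_i = lambda + mu_i; indices i = 0..N-1 correspond to 1..N. *)
Definition Delta (N : nat) (alpha tau0 : R) (c mu : nat -> C) (lam : C)
    (q : R -> C) (x : R) : C :=
  Cminus (Cmult (Cmult (Cplus lam (RtoC alpha)) (Cexp (Cmult lam (RtoC tau0)))) (q x))
         (Csum N (fun i => Cmult (c i) (Kop (Cplus lam (mu i)) q x))).

Definition op_identity (N : nat) (alpha tau0 : R) (c mu : nat -> C) (lam : C)
    (zeta beta : nat -> C) : Prop :=
  forall (q : R -> C) (dq : nat -> R -> C),
    Cn_on_I (2 * N) q dq ->
    exists dD : nat -> R -> C,
      (forall x, I11 x -> dD O x = Delta N alpha tau0 c mu lam q x) /\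
      deriv_chain (2 * N) dD /\
      forall x, I11 x ->
        Cplus (Csum N (fun k => Cmult (zeta k) (dD (2 * k)%nat x))) (dD (2 * N)%nat x)
        = Csum (S N) (fun k => Cmult (beta k) (dq (2 * k)%nat x)).

(* Writing [K q = e^{-kx} int_{-1}^x e^{kr} q + e^{kx} int_x^1 e^{-kr} q] shows
   [(D^2 - k^2) K q = -2 k q].  Hence [prod_i (D^2 - k_i^2)] maps [Delta(lambda) q] to a
   combination of the even derivatives of [q]: [zeta] is the coefficient list of
   [prod_i (X - k_i^2)], and [beta] collects [(lambda + alpha) e^{lambda tau0} zeta] and the
   terms [2 c_i k_i prod_{j <> i} (X - k_j^2)].

   For uniqueness, a second pair [(zeta', beta')] yields
   [sum_m (zeta_m - zeta'_m) D^{2m} Delta q = sum_m (beta_m - beta'_m) D^{2m} q].  On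
   [q = e^{sx}] with real [s > |k_i|], [K_i q] is a combination of [e^{sx}], [e^{k_i x}] and
   [e^{-k_i x}]; these exponentials are linearly independent on [-1,1] (sampling on an
   arithmetic progression gives a Vandermonde system), so
   [c_i sum_m (zeta_m - zeta'_m) k_i^{2m} = 0].  As [c_i <> 0] and the [k_i^2] are distinct,
   [zeta' = zeta]; then evaluating at [x = 0] for [N + 1] values of [s^2] gives [beta' = beta]. *)

From Pilot Require Import Defs.
From Stdlib Require Import Reals Lra Lia FunctionalExtensionality.
From Coquelicot Require Import Coquelicot.
Open Scope R_scope.

Section Complex_limits.
Context {T : Type} {F : (T -> Prop) -> Prop} {FF : Filter F}.

Lemma filterlim_Cplus (f g : T -> C) (a b : C) :
  filterlim f F (locally a) -> filterlim g F (locally b) ->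
  filterlim (fun y => Cplus (f y) (g y)) F (locally (Cplus a b)).
Proof.
  intros Hf Hg. eapply filterlim_comp_2; [exact Hf | exact Hg |].
  exact (@filterlim_plus C_AbsRing C_NormedModule a b).
Qed.

Lemma filterlim_Copp (f : T -> C) (a : C) :
  filterlim f F (locally a) -> filterlim (fun y => Copp (f y)) F (locally (Copp a)).
Proof.
  intros Hf. eapply filterlim_comp; [exact Hf|].
  exact (@filterlim_opp C_AbsRing C_NormedModule a).
Qed.

Lemma filterlim_C_Cmod (f : T -> C) (a : C) :
  filterlim f F (locally a) <->
  forall eps : R, 0 < eps -> F (fun y => Cmod (Cminus (f y) a) < eps).
Proof.
  split.
  - intros H eps He. apply (H (fun z => Cmod (Cminus z a) < eps)).
    apply (@locally_le_locally_norm R_AbsRing C_R_NormedModule).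
    exists (mkposreal eps He). intros y Hy. rewrite Cmod_norm. exact Hy.
  - intros H P HP. apply (@locally_norm_le_locally R_AbsRing C_R_NormedModule) in HP.
    destruct HP as [e He]. unfold filtermap. generalize (H e (cond_pos e)). apply filter_imp.
    intros y Hy. apply He. unfold ball_norm. rewrite <- Cmod_norm. exact Hy.
Qed.

Lemma filterlim_C_components (h : T -> C) (l : C) :
  filterlim (fun y => fst (h y)) F (locally (fst l)) ->
  filterlim (fun y => snd (h y)) F (locally (snd l)) ->
  filterlim h F (locally l).
Proof.
  intros H1 H2 P [e He].
  assert (A1 := H1 _ (locally_ball (fst l) e)). assert (A2 := H2 _ (locally_ball (snd l) e)).
  unfold filtermap in *. generalize (filter_and _ _ A1 A2). apply filter_imp.
  intros y [Y1 Y2]. apply He. split; assumption.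
Qed.

(* Bilinearity estimate: [|f g - a b| <= |f| |g - b| + |f - a| |b|], with [|f| <= |a| + 1]. *)
Lemma filterlim_Cmult (f g : T -> C) (a b : C) :
  filterlim f F (locally a) -> filterlim g F (locally b) ->
  filterlim (fun y => Cmult (f y) (g y)) F (locally (Cmult a b)).
Proof.
  rewrite !filterlim_C_Cmod. intros Hf Hg eps He.
  assert (Ha := Cmod_ge_0 a). assert (Hb := Cmod_ge_0 b).
  set (e1 := Rmin 1 (eps / (2 * (Cmod b + 1)))).
  set (e2 := eps / (2 * (Cmod a + 2))).
  assert (He1 : 0 < e1) by (apply Rmin_pos; [lra | apply Rdiv_lt_0_compat; lra]).
  assert (He1' : e1 <= 1) by apply Rmin_l.
  assert (He1b : e1 * (Cmod b + 1) <= eps / 2).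
  { apply Rle_trans with (eps / (2 * (Cmod b + 1)) * (Cmod b + 1)).
    - apply Rmult_le_compat_r; [lra | apply Rmin_r].
    - right. field. lra. }
  assert (He2 : (Cmod a + 2) * e2 = eps / 2) by (unfold e2; field; lra).
  generalize (filter_and _ _ (Hf e1 He1) (Hg e2 ltac:(unfold e2; apply Rdiv_lt_0_compat; lra))).
  apply filter_imp. intros y [H1 H2].
  replace (Cminus (Cmult (f y) (g y)) (Cmult a b)) with
    (Cplus (Cmult (f y) (Cminus (g y) b)) (Cmult (Cminus (f y) a) b)) by ring.
  eapply Rle_lt_trans; [apply Cmod_triangle|]. rewrite !Cmod_mult.
  assert (Hfy : Cmod (f y) <= Cmod a + 1).
  { replace (f y) with (Cplus a (Cminus (f y) a)) by ring.
    eapply Rle_trans; [apply Cmod_triangle | lra]. }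
  assert (Cmod (f y) * Cmod (Cminus (g y) b) <= (Cmod a + 2) * e2)
    by (apply Rmult_le_compat; try apply Cmod_ge_0; lra).
  assert (Cmod (Cminus (f y) a) * Cmod b < e1 * (Cmod b + 1)).
  { apply Rle_lt_trans with (e1 * Cmod b).
    - apply Rmult_le_compat_r; lra.
    - apply Rmult_lt_compat_l; lra. }
  lra.
Qed.

End Complex_limits.

(** * Derivatives relative to a subset of the real line *)

Definition diff_quot (f : R -> C) (x y : R) : C :=
  Cmult (RtoC (/ (y - x))) (Cminus (f y) (f x)).

Definition punctured_within (S : R -> Prop) (x : R) :=
  within (fun y => S y /\ y <> x) (locally x).

(* [is_deriv_in I11] is convertible to [is_deriv_on_I]. *)
Definition is_deriv_in (S : R -> Prop) (f g : R -> C) : Prop :=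
  forall x, S x -> filterlim (diff_quot f x) (punctured_within S x) (locally (g x)).

#[export] Instance punctured_within_filter S x : Filter (punctured_within S x).
Proof. apply within_filter, locally_filter. Qed.

Lemma punctured_within_dist S x eps :
  0 < eps -> punctured_within S x (fun y => Rabs (y - x) < eps).
Proof. intros He. apply filter_imp with (2 := locally_ball x (mkposreal eps He)). auto. Qed.

Lemma punctured_within_in S x : punctured_within S x (fun y => S y /\ y <> x).
Proof. unfold punctured_within, within. apply filter_forall. auto. Qed.

Lemma is_deriv_in_cont S f g x :
  is_deriv_in S f g -> S x -> filterlim f (punctured_within S x) (locally (f x)).
Proof.
  intros H Sx.
  assert (Hdx : filterlim (fun y => RtoC (y - x)) (punctured_within S x) (locally (RtoC 0))).
  { apply filterlim_C_Cmod. intros eps He. generalize (punctured_within_dist S x eps He).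
    apply filter_imp. intros y Hy. rewrite <- RtoC_minus, Rminus_0_r, Cmod_R. exact Hy. }
  assert (L := filterlim_Cplus _ _ _ _ (filterlim_const (f x)) (filterlim_Cmult _ _ _ _ Hdx (H x Sx))).
  replace (Cplus (f x) (Cmult (RtoC 0) (g x))) with (f x) in L by ring.
  eapply filterlim_ext_loc; [|exact L]. generalize (punctured_within_in S x). apply filter_imp.
  intros y [_ Hy]. unfold diff_quot. rewrite Cmult_assoc, <- RtoC_mult, Rinv_r by lra. ring.
Qed.

Section Deriv_rules.
Variable S : R -> Prop.

Lemma is_deriv_in_ext f1 f2 g1 g2 :
  (forall y, S y -> f1 y = f2 y) -> (forall y, S y -> g1 y = g2 y) ->
  is_deriv_in S f1 g1 -> is_deriv_in S f2 g2.
Proof.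
  intros E1 E2 H x Sx. rewrite <- E2 by auto.
  apply (filterlim_ext_loc (diff_quot f1 x)); [| exact (H x Sx)].
  generalize (punctured_within_in S x). apply filter_imp.
  intros y [Hy _]. unfold diff_quot. rewrite !E1; auto.
Qed.

Lemma is_deriv_in_const c : is_deriv_in S (fun _ => c) (fun _ => RtoC 0).
Proof.
  intros x Sx. eapply filterlim_ext; [|apply filterlim_const]. intros y. unfold diff_quot. ring.
Qed.

Lemma is_deriv_in_plus f g f' g' : is_deriv_in S f f' -> is_deriv_in S g g' ->
  is_deriv_in S (fun y => Cplus (f y) (g y)) (fun y => Cplus (f' y) (g' y)).
Proof.
  intros Hf Hg x Sx. eapply filterlim_ext; [|exact (filterlim_Cplus _ _ _ _ (Hf x Sx) (Hg x Sx))].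
  intros y. unfold diff_quot. ring.
Qed.

Lemma is_deriv_in_opp f f' : is_deriv_in S f f' ->
  is_deriv_in S (fun y => Copp (f y)) (fun y => Copp (f' y)).
Proof.
  intros Hf x Sx. eapply filterlim_ext; [|exact (filterlim_Copp _ _ (Hf x Sx))].
  intros y. unfold diff_quot. ring.
Qed.

Lemma is_deriv_in_minus f g f' g' : is_deriv_in S f f' -> is_deriv_in S g g' ->
  is_deriv_in S (fun y => Cminus (f y) (g y)) (fun y => Cminus (f' y) (g' y)).
Proof. intros Hf Hg. apply is_deriv_in_plus; [exact Hf | apply is_deriv_in_opp, Hg]. Qed.

Lemma is_deriv_in_mult f g f' g' : is_deriv_in S f f' -> is_deriv_in S g g' ->
  is_deriv_in S (fun y => Cmult (f y) (g y))
    (fun y => Cplus (Cmult (f' y) (g y)) (Cmult (f y) (g' y))).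
Proof.
  intros Hf Hg x Sx.
  assert (L := filterlim_Cplus _ _ _ _
    (filterlim_Cmult _ _ _ _ (Hf x Sx) (is_deriv_in_cont S g g' x Hg Sx))
    (filterlim_Cmult _ _ _ _ (filterlim_const (f x)) (Hg x Sx))).
  eapply filterlim_ext; [|exact L]. intros y. unfold diff_quot. ring.
Qed.

Lemma is_deriv_in_scal c f f' : is_deriv_in S f f' ->
  is_deriv_in S (fun y => Cmult c (f y)) (fun y => Cmult c (f' y)).
Proof.
  intros Hf.
  eapply is_deriv_in_ext; [| | exact (is_deriv_in_mult _ _ _ _ (is_deriv_in_const c) Hf)];
    intros y _; [reflexivity | cbv beta; ring].
Qed.

End Deriv_rules.

(** * The complex exponential *)

Lemma Cexp_add a b : Cexp (Cplus a b) = Cmult (Cexp a) (Cexp b).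
Proof.
  destruct a as [a1 a2], b as [b1 b2]. unfold Cexp, Cmult, Cplus; simpl.
  rewrite exp_plus, cos_plus, sin_plus. f_equal; ring.
Qed.

Lemma Cexp_0 : Cexp (RtoC 0) = RtoC 1.
Proof. unfold Cexp, RtoC; simpl. rewrite exp_0, cos_0, sin_0. f_equal; ring. Qed.

Lemma Cexp_neq_0 z : Cexp z <> RtoC 0.
Proof.
  intros H. assert (E : Cexp (Cplus z (Copp z)) = RtoC 1) by (rewrite Cplus_opp_r; apply Cexp_0).
  rewrite Cexp_add, H, Cmult_0_l in E. injection E. lra.
Qed.

Lemma Cexp_eq_1 z : Cexp z = RtoC 1 -> Cmod z < 2 * PI -> z = RtoC 0.
Proof.
  destruct z as [a b]. unfold Cexp. simpl. intros H Hm. injection H as H1 H2.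
  assert (Ha := exp_pos a). assert (Hpi := PI_RGT_0).
  assert (Hb : Rabs b < 2 * PI).
  { eapply Rle_lt_trans; [| exact Hm]. eapply Rle_trans; [| apply (Rmax_Cmod (a, b))]. apply Rmax_r. }
  assert (Hc : 0 < cos b) by (apply Rmult_lt_reg_l with (exp a); lra).
  destruct (sin_eq_0_0 b ltac:(apply Rmult_eq_reg_l with (exp a); lra)) as [k ->].
  assert (Hk : (-2 < k < 2)%Z).
  { assert (Rabs (IZR k) < 2).
    { apply Rmult_lt_reg_r with PI; [lra|]. rewrite Rabs_mult, (Rabs_right PI) in Hb; lra. }
    apply Rabs_def2 in H. split; apply lt_IZR; simpl; lra. }
  assert (k = 0 \/ k = 1 \/ k = -1)%Z as [-> | [-> | ->]] by lia.
  2: { rewrite Rmult_1_l, cos_PI in Hc. lra. }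
  2: { replace (-1 * PI) with (- PI) in Hc by ring. rewrite cos_neg, cos_PI in Hc. lra. }
  rewrite Rmult_0_l, cos_0, Rmult_1_r, <- exp_0 in H1. apply exp_inv in H1.
  subst a. unfold RtoC. f_equal. ring.
Qed.

Definition expC (a : C) (x : R) : C := Cexp (Cmult a (RtoC x)).

Lemma expC_components a y :
  expC a y = (exp (fst a * y) * cos (snd a * y), exp (fst a * y) * sin (snd a * y)).
Proof. destruct a as [a1 a2]. unfold expC, Cexp, Cmult, RtoC; simpl. f_equal; f_equal; f_equal; ring. Qed.

Lemma expC_neq_0 a x : expC a x <> RtoC 0.
Proof. apply Cexp_neq_0. Qed.

Lemma expC_plus_l a b x : expC (Cplus a b) x = Cmult (expC a x) (expC b x).
Proof. unfold expC. rewrite <- Cexp_add. f_equal. ring. Qed.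

Lemma expC_plus_r a x y : expC a (x + y) = Cmult (expC a x) (expC a y).
Proof. unfold expC. rewrite <- Cexp_add, RtoC_plus. f_equal. ring. Qed.

Lemma expC_0_l x : expC (RtoC 0) x = RtoC 1.
Proof. unfold expC. rewrite Cmult_0_l. apply Cexp_0. Qed.

Lemma expC_0_r a : expC a 0 = RtoC 1.
Proof. unfold expC. rewrite Cmult_0_r. apply Cexp_0. Qed.

Lemma expC_opp_mul k x : Cmult (expC (Copp k) x) (expC k x) = RtoC 1.
Proof. rewrite <- expC_plus_l, Cplus_comm, Cplus_opp_r. apply expC_0_l. Qed.

Lemma expC_pow a h n : expC a (INR n * h) = Cpow (expC a h) n.
Proof.
  induction n as [|n IH].
  - rewrite Rmult_0_l. apply expC_0_r.
  - rewrite S_INR, Rmult_plus_distr_r, Rmult_1_l, expC_plus_r, IH. simpl. ring.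
Qed.

Lemma expC_inj_at a b h : 0 < h -> Cmod (Cminus a b) * h < 2 * PI ->
  expC a h = expC b h -> a = b.
Proof.
  intros Hh Hm E.
  assert (E1 : Cexp (Cmult (Cminus a b) (RtoC h)) = RtoC 1).
  { change (expC (Cminus a b) h = RtoC 1).
    unfold Cminus. rewrite expC_plus_l, E, Cmult_comm. apply expC_opp_mul. }
  apply Cexp_eq_1 in E1.
  - replace a with (Cplus (Cmult (Cmult (Cminus a b) (RtoC h)) (RtoC (/ h))) b).
    + rewrite E1. ring.
    + rewrite <- Cmult_assoc, <- RtoC_mult, Rinv_r by lra. ring.
  - rewrite Cmod_mult, Cmod_R, Rabs_right by lra. exact Hm.
Qed.

Lemma derivable_pt_lim_diff_quot S (f : R -> R) x l : derivable_pt_lim f x l ->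
  filterlim (fun y => / (y - x) * (f y - f x)) (punctured_within S x) (locally l).
Proof.
  intros H. apply (filterlim_locally (F := punctured_within S x)). intros eps.
  destruct (H eps (cond_pos eps)) as [d Hd].
  exists d. intros y Hy [_ Hyx]. change R in y. change (Rabs (y - x) < d) in Hy.
  specialize (Hd (y - x) ltac:(lra) Hy). replace (x + (y - x)) with y in Hd by ring.
  change (Rabs (/ (y - x) * (f y - f x) - l) < eps).
  unfold Rdiv in Hd. rewrite Rmult_comm. exact Hd.
Qed.

Lemma is_deriv_in_expC S a : is_deriv_in S (expC a) (fun x => Cmult a (expC a x)).
Proof.
  intros x Sx. destruct a as [a1 a2]. apply filterlim_C_components.
  - eapply filterlim_ext; [| apply (derivable_pt_lim_diff_quot S (fun y => exp (a1 * y) * cos (a2 * y)))].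
    + intros y. unfold diff_quot. rewrite !expC_components. simpl. ring.
    + rewrite expC_components. apply is_derive_Reals. auto_derive; auto. simpl. ring.
  - eapply filterlim_ext; [| apply (derivable_pt_lim_diff_quot S (fun y => exp (a1 * y) * sin (a2 * y)))].
    + intros y. unfold diff_quot. rewrite !expC_components. simpl. ring.
    + rewrite expC_components. apply is_derive_Reals. auto_derive; auto. simpl. ring.
Qed.

Lemma continuous_of_punctured (f : R -> C) x :
  filterlim f (punctured_within (fun _ => True) x) (locally (f x)) -> continuous f x.
Proof.
  intros H P HP. specialize (H P HP). unfold filtermap, punctured_within, within in *.
  apply locally_singleton in HP.
  revert H. apply filter_imp. intros y Hy. destruct (Req_dec y x) as [->|Hne]; auto.
Qed.

Lemma continuous_Cmult (f g : R -> C) x : continuous f x -> continuous g x ->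
  continuous (fun y => Cmult (f y) (g y)) x.
Proof. apply filterlim_Cmult. Qed.

Lemma continuous_expC a x : continuous (expC a) x.
Proof. apply continuous_of_punctured, (is_deriv_in_cont _ _ _ x (is_deriv_in_expC _ a)). auto. Qed.

Lemma is_derive_diff_quot S (f : R -> C_R_NormedModule) x l :
  is_derive f x l -> filterlim (diff_quot f x) (punctured_within S x) (locally l).
Proof.
  intros [_ H]. specialize (H x (fun P HP => HP)).
  apply filterlim_C_Cmod. intros eps He. specialize (H (mkposreal (eps / 2) ltac:(lra))).
  unfold punctured_within, within. revert H. apply filter_imp. intros y Hy [_ Hyx].
  change R in y. rewrite <- !Cmod_norm, scal_R_Cmult in Hy.
  change (Cmod (Cminus (Cminus (f y) (f x)) (Cmult (RtoC (y - x)) l)) <= eps / 2 * Rabs (y - x)) in Hy.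
  assert (E : Cminus (diff_quot f x y) l =
    Cmult (RtoC (/ (y - x))) (Cminus (Cminus (f y) (f x)) (Cmult (RtoC (y - x)) l))).
  { unfold diff_quot. replace l with (Cmult (Cmult (RtoC (/ (y - x))) (RtoC (y - x))) l) at 1.
    - ring.
    - rewrite <- RtoC_mult, Rinv_l by lra. ring. }
  rewrite E, Cmod_mult, Cmod_R, Rabs_inv.
  assert (Hpos : 0 < Rabs (y - x)) by (apply Rabs_pos_lt; lra).
  apply Rle_lt_trans with (/ Rabs (y - x) * (eps / 2 * Rabs (y - x))).
  - apply Rmult_le_compat_l; [left; apply Rinv_0_lt_compat |]; assumption.
  - field_simplify; lra.
Qed.

Lemma diff_quot_is_derive (f : R -> C) x l :
  filterlim (diff_quot f x) (punctured_within (fun _ => True) x) (locally l) ->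
  is_derive (V := C_R_NormedModule) f x l.
Proof.
  intros H. split; [apply is_linear_scal_l|].
  intros x0 Hx0. apply (@is_filter_lim_locally_unique R_AbsRing R_NormedModule) in Hx0. subst x0.
  intros eps. assert (H' := proj1 (filterlim_C_Cmod _ _) H eps (cond_pos eps)).
  unfold punctured_within, within in H'. revert H'. apply filter_imp. intros y Hy.
  change R in y. rewrite <- !Cmod_norm, scal_R_Cmult.
  change (Cmod (Cminus (Cminus (f y) (f x)) (Cmult (RtoC (y - x)) l)) <= eps * Rabs (y - x)).
  destruct (Req_dec y x) as [->|Hne].
  - rewrite Rminus_diag. replace (Cminus (Cminus (f x) (f x)) (Cmult (RtoC 0) l)) with (RtoC 0) by ring.
    rewrite Cmod_0. apply Rmult_le_pos; [left; apply cond_pos | apply Rabs_pos].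
  - specialize (Hy (conj I Hne)).
    replace (Cminus (Cminus (f y) (f x)) (Cmult (RtoC (y - x)) l)) with
      (Cmult (RtoC (y - x)) (Cminus (diff_quot f x y) l)).
    + rewrite Cmod_mult, Cmod_R, Rmult_comm. apply Rmult_le_compat_r; [apply Rabs_pos | lra].
    + assert (H1 : Cmult (RtoC (y - x)) (RtoC (/ (y - x))) = RtoC 1)
        by (rewrite <- RtoC_mult, Rinv_r by lra; reflexivity).
      unfold diff_quot.
      transitivity (Cminus (Cmult (Cmult (RtoC (y - x)) (RtoC (/ (y - x)))) (Cminus (f y) (f x)))
                           (Cmult (RtoC (y - x)) l)); [ring | rewrite H1; ring].
Qed.

Definition RIntC (g : R -> C) (a b : R) : C := @RInt C_R_CompleteNormedModule g a b.

Lemma is_deriv_in_RIntC S (g : R -> C) a : (forall x, continuous g x) ->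
  is_deriv_in S (fun x => RIntC g a x) g.
Proof.
  intros Hc x Sx. apply is_derive_diff_quot.
  apply (is_derive_RInt (V := C_R_CompleteNormedModule) g _ a); [| auto].
  apply filter_forall. intros b. apply RInt_correct, ex_RInt_continuous. auto.
Qed.

Lemma is_RInt_Cmult (g : R -> C) a b (l c : C) :
  @is_RInt C_R_NormedModule g a b l ->
  @is_RInt C_R_NormedModule (fun t => Cmult c (g t)) a b (Cmult c l).
Proof.
  intros H.
  assert (H1 := @is_RInt_fct_extend_fst R_NormedModule R_NormedModule g a b l H).
  assert (H2 := @is_RInt_fct_extend_snd R_NormedModule R_NormedModule g a b l H).
  destruct c as [c1 c2].
  replace (Cmult (c1, c2) l) with ((c1 * fst l - c2 * snd l, c1 * snd l + c2 * fst l) : C)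
    by (destruct l; unfold Cmult; simpl; f_equal; ring).
  apply (@is_RInt_fct_extend_pair R_NormedModule R_NormedModule (fun t => Cmult (c1, c2) (g t))).
  - apply (is_RInt_ext (fun t => minus (scal c1 (fst (g t))) (scal c2 (snd (g t))))).
    + intros t _. destruct (g t). reflexivity.
    + apply (is_RInt_minus (V := R_NormedModule));
        [exact (is_RInt_scal _ _ _ c1 _ H1) | exact (is_RInt_scal _ _ _ c2 _ H2)].
  - apply (is_RInt_ext (fun t => plus (scal c1 (snd (g t))) (scal c2 (fst (g t))))).
    + intros t _. destruct (g t). reflexivity.
    + apply (is_RInt_plus (V := R_NormedModule));
        [exact (is_RInt_scal _ _ _ c1 _ H2) | exact (is_RInt_scal _ _ _ c2 _ H1)].
Qed.

Lemma is_RInt_Cmult_on (h g : R -> C) c a b : a <= b ->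
  (forall r, a < r < b -> h r = Cmult c (g r)) -> (forall r, continuous g r) ->
  @is_RInt C_R_NormedModule h a b (Cmult c (RIntC g a b)).
Proof.
  intros Hab E Hc. apply (is_RInt_ext (fun r => Cmult c (g r))).
  - intros r Hr. rewrite Rmin_left, Rmax_right in Hr by lra. symmetry. auto.
  - apply is_RInt_Cmult, (RInt_correct (V := C_R_CompleteNormedModule)), ex_RInt_continuous. auto.
Qed.

Lemma RIntC_expC a u v : a <> RtoC 0 ->
  RIntC (expC a) u v = Cmult (Cinv a) (Cminus (expC a v) (expC a u)).
Proof.
  intros Ha. apply (is_RInt_unique (V := C_R_CompleteNormedModule)).
  replace (Cmult (Cinv a) (Cminus (expC a v) (expC a u)))
    with (@minus C_R_NormedModule (Cmult (Cinv a) (expC a v)) (Cmult (Cinv a) (expC a u)))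
    by (change (Cminus (Cmult (Cinv a) (expC a v)) (Cmult (Cinv a) (expC a u))
                = Cmult (Cinv a) (Cminus (expC a v) (expC a u))); ring).
  apply (@is_RInt_derive C_R_CompleteNormedModule (fun r => Cmult (Cinv a) (expC a r))).
  - intros r _. apply diff_quot_is_derive.
    replace (expC a r) with (Cmult (Cinv a) (Cmult a (expC a r))) by (field; exact Ha).
    exact (is_deriv_in_scal _ (Cinv a) _ _ (is_deriv_in_expC _ a) r I).
  - intros r _. apply continuous_expC.
Qed.

Lemma is_deriv_in_RIntC_lower S (g : R -> C) b : (forall x, continuous g x) ->
  is_deriv_in S (fun x => RIntC g x b) (fun x => Copp (g x)).
Proof.
  intros Hc. apply (is_deriv_in_ext S (fun x => Copp (RIntC g b x)) _ (fun x => Copp (g x)));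
    [| reflexivity |].
  - intros x _. unfold RIntC. change Copp with (@opp C_R_CompleteNormedModule).
    apply (opp_RInt_swap (V := C_R_CompleteNormedModule)), ex_RInt_continuous. auto.
  - apply is_deriv_in_opp, is_deriv_in_RIntC, Hc.
Qed.

(** * The integral operators [K] *)

(* [Kop k q x] splits at [r = x] into [e^{-kx} (kernel_left k q x) + e^{kx} (kernel_right k q x)]. *)
Definition kernel_left (k : C) (q : R -> C) (x : R) : C :=
  RIntC (fun r => Cmult (expC k r) (q r)) (-1) x.

Definition kernel_right (k : C) (q : R -> C) (x : R) : C :=
  RIntC (fun r => Cmult (expC (Copp k) r) (q r)) x 1.

Definition kernel_val (k : C) (q : R -> C) (x : R) : C :=
  Cplus (Cmult (expC (Copp k) x) (kernel_left k q x)) (Cmult (expC k x) (kernel_right k q x)).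

Definition kernel_slope (k : C) (q : R -> C) (x : R) : C :=
  Cmult k (Cminus (Cmult (expC k x) (kernel_right k q x)) (Cmult (expC (Copp k) x) (kernel_left k q x))).

Lemma Kop_kernel_val k q qh x :
  (forall r, I11 r -> q r = qh r) -> (forall r, continuous qh r) -> I11 x ->
  Kop k q x = kernel_val k qh x.
Proof.
  intros Eq Hc [Hx1 Hx2].
  set (h := fun r => Cmult (Cexp (Cmult (Copp k) (RtoC (Rabs (x - r))))) (q r)).
  assert (Hcont : forall a r, continuous (fun r => Cmult (expC a r) (qh r)) r)
    by (intros; apply continuous_Cmult; [apply continuous_expC | apply Hc]).
  assert (L : @is_RInt C_R_NormedModule h (-1) x (Cmult (expC (Copp k) x) (kernel_left k qh x))).
  { apply is_RInt_Cmult_on; auto. intros r Hr. unfold h.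
    rewrite Eq by (unfold I11; lra). rewrite Rabs_right by lra.
    unfold expC. rewrite Cmult_assoc, <- Cexp_add, RtoC_minus. f_equal. f_equal. ring. }
  assert (R' : @is_RInt C_R_NormedModule h x 1 (Cmult (expC k x) (kernel_right k qh x))).
  { apply is_RInt_Cmult_on; auto. intros r Hr. unfold h.
    rewrite Eq by (unfold I11; lra). rewrite Rabs_left by lra.
    unfold expC. rewrite Cmult_assoc, <- Cexp_add, RtoC_opp, RtoC_minus. f_equal. f_equal. ring. }
  unfold Kop, kernel_val. fold h.
  rewrite <- (is_RInt_unique (V := C_R_CompleteNormedModule) _ _ _ _ L),
          <- (is_RInt_unique (V := C_R_CompleteNormedModule) _ _ _ _ R').
  symmetry. apply (RInt_Chasles (V := C_R_CompleteNormedModule)); eexists; eassumption.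
Qed.

Definition Kop_expC_coef_s (k s : C) : C := Cminus (Cinv (Cplus k s)) (Cinv (Cminus s k)).

Definition Kop_expC_coef_k (k s : C) : C := Cmult (expC (Cminus s k) 1) (Cinv (Cminus s k)).

Definition Kop_expC_coef_mk (k s : C) : C := Copp (Cmult (expC (Cplus k s) (-1)) (Cinv (Cplus k s))).

Lemma Kop_expC k s x : Cplus k s <> RtoC 0 -> Cminus s k <> RtoC 0 -> I11 x ->
  Kop k (expC s) x =
  Cplus (Cmult (Kop_expC_coef_s k s) (expC s x))
    (Cplus (Cmult (Kop_expC_coef_k k s) (expC k x)) (Cmult (Kop_expC_coef_mk k s) (expC (Copp k) x))).
Proof.
  intros H1 H2 Hx. unfold Kop_expC_coef_s, Kop_expC_coef_k, Kop_expC_coef_mk.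
  rewrite (Kop_kernel_val k (expC s) (expC s) x); auto using continuous_expC.
  unfold kernel_val, kernel_left, kernel_right.
  assert (E1 : (fun r => Cmult (expC k r) (expC s r)) = expC (Cplus k s))
    by (apply functional_extensionality; intros r; rewrite expC_plus_l; reflexivity).
  assert (E2 : (fun r => Cmult (expC (Copp k) r) (expC s r)) = expC (Cminus s k)).
  { apply functional_extensionality. intros r.
    unfold Cminus. rewrite Cplus_comm, expC_plus_l. reflexivity. }
  rewrite E1, E2, !RIntC_expC by auto.
  assert (Hinv : expC (Copp k) x = Cinv (expC k x)).
  { rewrite <- (Cmult_1_r (expC (Copp k) x)), <- (Cinv_r (expC k x)) by apply expC_neq_0.
    rewrite Cmult_assoc, expC_opp_mul. ring. }
  unfold Cminus. rewrite (expC_plus_l k s x), (expC_plus_l s (Copp k) x), Hinv.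
  assert (Hn := expC_neq_0 k x). field. repeat split; auto.
Qed.

Section Kernel_derivatives.
Variables (k : C) (qh : R -> C).
Hypothesis qh_cont : forall r, continuous qh r.

Let integrand_cont a : forall r, continuous (fun r => Cmult (expC a r) (qh r)) r.
Proof. intros r. apply continuous_Cmult; [apply continuous_expC | apply qh_cont]. Qed.

Let is_deriv_in_left S :
  is_deriv_in S (kernel_left k qh) (fun x => Cmult (expC k x) (qh x)).
Proof. apply is_deriv_in_RIntC, integrand_cont. Qed.

Let is_deriv_in_right S :
  is_deriv_in S (kernel_right k qh) (fun x => Copp (Cmult (expC (Copp k) x) (qh x))).
Proof. apply is_deriv_in_RIntC_lower, integrand_cont. Qed.

Lemma is_deriv_in_kernel_val S : is_deriv_in S (kernel_val k qh) (kernel_slope k qh).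
Proof.
  eapply is_deriv_in_ext; [| | apply is_deriv_in_plus; apply is_deriv_in_mult;
    [apply is_deriv_in_expC | apply is_deriv_in_left | apply is_deriv_in_expC | apply is_deriv_in_right]];
    intros y _; [reflexivity | unfold kernel_slope; ring].
Qed.

(* The product [e^{-kx} e^{kx} q] produced by the product rule collapses to [q]. *)
Lemma is_deriv_in_kernel_slope S : is_deriv_in S (kernel_slope k qh)
  (fun x => Cminus (Cmult (Cmult k k) (kernel_val k qh x)) (Cmult (Cmult (RtoC 2) k) (qh x))).
Proof.
  eapply is_deriv_in_ext; [| | apply is_deriv_in_scal, is_deriv_in_minus; apply is_deriv_in_mult;
    [apply is_deriv_in_expC | apply is_deriv_in_right | apply is_deriv_in_expC | apply is_deriv_in_left]];
    intros y _; [reflexivity |].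
  transitivity (Cminus (Cmult (Cmult k k) (kernel_val k qh y))
    (Cmult (Cmult (RtoC 2) k) (Cmult (Cmult (expC (Copp k) y) (expC k y)) (qh y)))).
  - unfold kernel_val. ring.
  - rewrite expC_opp_mul. ring.
Qed.

(* Derivatives of [x |-> Kop k q x] given the derivatives [d] of [q]: from
   [(D^2 - k^2) K q = -2 k q]. *)
Fixpoint kernel_derivs (d : nat -> R -> C) (n : nat) : R -> C :=
  match n with
  | O => kernel_val k qh
  | S O => kernel_slope k qh
  | S (S m as m') => fun x => Cminus (Cmult (Cmult k k) (kernel_derivs d m x))
                                     (Cmult (Cmult (RtoC 2) k) (d m x))
  end.

Lemma kernel_derivs_chain M d : deriv_chain M d -> (forall x, I11 x -> d O x = qh x) ->
  forall n, (n < M)%nat -> is_deriv_in I11 (kernel_derivs d n) (kernel_derivs d (S n)).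
Proof.
  intros Hd Hd0.
  enough (G : forall n,
    ((n < M)%nat -> is_deriv_in I11 (kernel_derivs d n) (kernel_derivs d (S n))) /\
    ((S n < M)%nat -> is_deriv_in I11 (kernel_derivs d (S n)) (kernel_derivs d (S (S n)))))
    by (intros n; apply G).
  induction n as [|n IH]; split; intros Hn.
  - apply is_deriv_in_kernel_val.
  - eapply is_deriv_in_ext; [reflexivity | | apply is_deriv_in_kernel_slope].
    intros y Hy. simpl. rewrite Hd0; auto.
  - apply IH, Hn.
  - apply is_deriv_in_minus; apply is_deriv_in_scal; [apply IH; lia | apply Hd; lia].
Qed.

End Kernel_derivatives.

(** * Finite sums and polynomials *)

Lemma Csum_ext n f g : (forall m, (m < n)%nat -> f m = g m) -> Csum n f = Csum n g.
Proof. induction n; simpl; intros H; auto. rewrite IHn, H by (auto; lia). reflexivity. Qed.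

Lemma Csum_plus n f g : Csum n (fun m => Cplus (f m) (g m)) = Cplus (Csum n f) (Csum n g).
Proof. induction n; simpl; [ring | rewrite IHn; ring]. Qed.

Lemma Csum_minus n f g : Csum n (fun m => Cminus (f m) (g m)) = Cminus (Csum n f) (Csum n g).
Proof. induction n; simpl; [ring | rewrite IHn; ring]. Qed.

Lemma Csum_mult_minus_l n f g h :
  Csum n (fun m => Cmult (Cminus (f m) (g m)) (h m)) =
  Cminus (Csum n (fun m => Cmult (f m) (h m))) (Csum n (fun m => Cmult (g m) (h m))).
Proof. induction n; simpl; [ring | rewrite IHn; ring]. Qed.

Lemma Csum_opp n f : Csum n (fun m => Copp (f m)) = Copp (Csum n f).
Proof. induction n; simpl; [ring | rewrite IHn; ring]. Qed.

Lemma Csum_mult_l n c f : Csum n (fun m => Cmult c (f m)) = Cmult c (Csum n f).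
Proof. induction n; simpl; [ring | rewrite IHn; ring]. Qed.

Lemma Csum_mult_r n f c : Csum n (fun m => Cmult (f m) c) = Cmult (Csum n f) c.
Proof. induction n; simpl; [ring | rewrite IHn; ring]. Qed.

Lemma Csum_zero n f : (forall m, (m < n)%nat -> f m = RtoC 0) -> Csum n f = RtoC 0.
Proof. induction n; simpl; intros H; auto. rewrite IHn, H by (auto; lia). ring. Qed.

Lemma Csum_S_l n f : Csum (S n) f = Cplus (f O) (Csum n (fun m => f (S m))).
Proof. induction n; simpl in *; [ring | rewrite IHn; ring]. Qed.

Lemma Csum_S_r n f : Csum (S n) f = Cplus (Csum n f) (f n).
Proof. reflexivity. Qed.

Lemma Csum_add a b g : Csum (a + b) g = Cplus (Csum a g) (Csum b (fun t => g (a + t)%nat)).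
Proof.
  induction b; simpl; [rewrite Nat.add_0_r; ring|].
  rewrite Nat.add_succ_r. simpl. rewrite IHb. ring.
Qed.

Lemma Csum_swap a b (F : nat -> nat -> C) :
  Csum a (fun i => Csum b (fun m => F i m)) = Csum b (fun m => Csum a (fun i => F i m)).
Proof.
  induction a; simpl.
  - symmetry. apply Csum_zero. auto.
  - rewrite IHa, <- Csum_plus. reflexivity.
Qed.

Lemma Cmult_integral_r a b : Cmult a b = RtoC 0 -> a <> RtoC 0 -> b = RtoC 0.
Proof. intros H Ha. replace b with (Cmult (Cinv a) (Cmult a b)) by (field; auto). rewrite H. ring. Qed.

Lemma Cminus_neq_0 a b : a <> b -> Cminus a b <> RtoC 0.
Proof. intros H E. apply H. replace a with (Cplus (Cminus a b) b) by ring. rewrite E. ring. Qed.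

Lemma Cplus_eq_0_l a b : Cplus a b = RtoC 0 -> a = Copp b.
Proof. intros H. replace a with (Cminus (Cplus a b) b) by ring. rewrite H. ring. Qed.

(* The transposed Vandermonde system has only the trivial solution. *)
Lemma power_sums_zero M (W Z : nat -> C) :
  (forall t t', (t < M)%nat -> (t' < M)%nat -> t <> t' -> Z t <> Z t') ->
  (forall n, (n < M)%nat -> Csum M (fun t => Cmult (W t) (Cpow (Z t) n)) = RtoC 0) ->
  forall t, (t < M)%nat -> W t = RtoC 0.
Proof.
  revert W. induction M as [|M IH]; intros W HZ HW; [intros; lia|].
  assert (Hlow : forall t, (t < M)%nat -> W t = RtoC 0).
  { intros t Ht.
    apply (Cmult_integral_r (Cminus (Z t) (Z M))); [| apply Cminus_neq_0, HZ; lia].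
    rewrite Cmult_comm. revert t Ht.
    apply (IH (fun t => Cmult (W t) (Cminus (Z t) (Z M)))); [intros; apply HZ; lia |].
    intros n Hn.
    assert (A0 := HW n ltac:(lia)). assert (A1 := HW (S n) ltac:(lia)). cbn [Csum] in A0, A1.
    transitivity (Cminus (Csum M (fun t => Cmult (W t) (Cpow (Z t) (S n))))
                         (Cmult (Z M) (Csum M (fun t => Cmult (W t) (Cpow (Z t) n))))).
    - rewrite <- Csum_mult_l, <- Csum_minus. apply Csum_ext. intros m _. simpl. ring.
    - rewrite (Cplus_eq_0_l _ _ A0), (Cplus_eq_0_l _ _ A1). simpl. ring. }
  intros t Ht. destruct (Nat.eq_dec t M) as [->|]; [| apply Hlow; lia].
  assert (A := HW O ltac:(lia)). simpl Csum in A.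
  rewrite Csum_zero in A by (intros m Hm; rewrite Hlow by auto; ring).
  rewrite <- A. simpl. ring.
Qed.

Definition Cpoly_eval (p : nat -> C) (M : nat) (X : C) : C :=
  Csum (S M) (fun m => Cmult (p m) (Cpow X m)).

(* The partial Horner evaluations of [p]. *)
Definition Cpoly_tail (p : nat -> C) (M j : nat) (X : C) : C :=
  Csum (S M - j) (fun t => Cmult (p (j + t)%nat) (Cpow X t)).

Lemma Cpoly_eval_tail p M X : Cpoly_eval p M X = Cpoly_tail p M O X.
Proof. unfold Cpoly_eval, Cpoly_tail. rewrite Nat.sub_0_r. reflexivity. Qed.

Lemma Cpoly_tail_horner p M j X : (j <= M)%nat ->
  Cpoly_tail p M j X = Cplus (p j) (Cmult X (Cpoly_tail p M (S j) X)).
Proof.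
  intros Hj. unfold Cpoly_tail. replace (S M - j)%nat with (S (S M - S j)) by lia.
  rewrite Csum_S_l, <- Csum_mult_l, Nat.add_0_r. simpl Cpow. f_equal; [ring|].
  apply Csum_ext. intros m _. rewrite Nat.add_succ_r. simpl. ring.
Qed.

Lemma Cpoly_tail_top p M X : Cpoly_tail p M (S M) X = RtoC 0.
Proof. unfold Cpoly_tail. rewrite Nat.sub_diag. reflexivity. Qed.

(* Synthetic division by [X - w]. *)
Lemma Cpoly_tail_div p M X w : forall k j, (j + k = M)%nat ->
  Cminus (Cpoly_tail p M j X) (Cpoly_tail p M j w) =
  Cmult (Cminus X w) (Csum k (fun t => Cmult (Cpoly_tail p M (S j + t) w) (Cpow X t))).
Proof.
  induction k; intros j Hj.
  - rewrite Nat.add_0_r in Hj. subst j.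
    rewrite !(Cpoly_tail_horner p M M) by lia. rewrite !Cpoly_tail_top. simpl. ring.
  - rewrite !(Cpoly_tail_horner p M j) by lia.
    transitivity (Cplus (Cmult (Cminus X w) (Cpoly_tail p M (S j) w))
                        (Cmult X (Cminus (Cpoly_tail p M (S j) X) (Cpoly_tail p M (S j) w)))); [ring|].
    rewrite (IHk (S j)) by lia. rewrite Csum_S_l, Nat.add_0_r, <- !Csum_mult_l.
    replace (Csum k (fun t => Cmult X (Cmult (Cminus X w)
               (Cmult (Cpoly_tail p M (S (S j) + t) w) (Cpow X t)))))
      with (Cmult (Cminus X w) (Csum k (fun t => Cmult (Cpoly_tail p M (S j + S t) w) (Cpow X (S t))))).
    + simpl. ring.
    + rewrite <- Csum_mult_l. apply Csum_ext. intros m _. rewrite Nat.add_succ_r. simpl. ring.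
Qed.

Lemma Cpoly_roots_zero M (p z : nat -> C) :
  (forall i j, (i <= M)%nat -> (j <= M)%nat -> i <> j -> z i <> z j) ->
  (forall i, (i <= M)%nat -> Cpoly_eval p M (z i) = RtoC 0) ->
  forall m, (m <= M)%nat -> p m = RtoC 0.
Proof.
  revert p z. induction M as [|M IH]; intros p z Hz Hr m Hm.
  - specialize (Hr O ltac:(lia)). unfold Cpoly_eval in Hr. simpl in Hr.
    replace m with O by lia. rewrite <- Hr. ring.
  - set (w := z (S M)).
    set (r := fun t => Cpoly_tail p (S M) (S t) w).
    assert (Hr0 : forall t, (t <= M)%nat -> r t = RtoC 0).
    { apply (IH r z); [intros; apply Hz; lia |]. intros i Hi.
      apply (Cmult_integral_r (Cminus (z i) w)); [| apply Cminus_neq_0, Hz; lia].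
      assert (D := Cpoly_tail_div p (S M) (z i) w (S M) O eq_refl).
      rewrite <- !Cpoly_eval_tail in D. unfold w in D. rewrite !Hr in D by lia.
      unfold Cpoly_eval, r, w. cbn [Nat.add] in D. rewrite <- D. ring. }
    assert (Htail : forall j, (1 <= j <= S (S M))%nat -> Cpoly_tail p (S M) j w = RtoC 0).
    { intros j Hj. destruct (Nat.eq_dec j (S (S M))) as [->|]; [apply Cpoly_tail_top|].
      destruct j as [|t]; [lia|]. apply (Hr0 t). lia. }
    assert (Hw : Cpoly_tail p (S M) O w = RtoC 0) by (rewrite <- Cpoly_eval_tail; apply Hr; lia).
    assert (E := Cpoly_tail_horner p (S M) m w Hm).
    rewrite (Htail (S m)), Cmult_0_r, Cplus_0_r in E by lia. rewrite <- E.
    destruct m as [|m]; [exact Hw | apply Htail; lia].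
Qed.

(** * Polynomials in [D^2] acting on sequences of derivatives *)

(* A sequence [f : nat -> C] stands for the derivatives [n |-> f^(n) (x)] at a fixed point,
   so [D^2 - w] acts as [n |-> f (n + 2) - w f n]. *)
Definition jet_dsq (w : C) (f : nat -> C) : nat -> C := fun n => Cminus (f (S (S n))) (Cmult w (f n)).

Fixpoint jet_prod (w : nat -> C) (n : nat) (f : nat -> C) : nat -> C :=
  match n with O => f | S n' => jet_dsq (w n') (jet_prod w n' f) end.

Fixpoint jet_prod_skip (w : nat -> C) (i n : nat) (f : nat -> C) : nat -> C :=
  match n with
  | O => f
  | S n' => if Nat.eqb n' i then jet_prod_skip w i n' f else jet_dsq (w n') (jet_prod_skip w i n' f)
  end.

Lemma jet_prod_dsq w n a f : jet_prod w n (jet_dsq a f) = jet_dsq a (jet_prod w n f).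
Proof.
  induction n; simpl; auto. rewrite IHn.
  apply functional_extensionality. intros m. unfold jet_dsq. ring.
Qed.

Lemma jet_prod_skip_small w i n f : (n <= i)%nat -> jet_prod_skip w i n f = jet_prod w n f.
Proof.
  induction n; simpl; intros H; auto.
  destruct (Nat.eqb_spec n i); [lia|]. rewrite IHn by lia. reflexivity.
Qed.

Lemma jet_prod_split w i n f : (i < n)%nat ->
  jet_prod w n f = jet_prod_skip w i n (jet_dsq (w i) f).
Proof.
  induction n; intros H; [lia|]. simpl. destruct (Nat.eqb_spec n i).
  - subst. rewrite jet_prod_skip_small, jet_prod_dsq by lia. reflexivity.
  - rewrite IHn by lia. reflexivity.
Qed.

Lemma jet_prod_scal w n c f :
  jet_prod w n (fun j => Cmult c (f j)) = fun j => Cmult c (jet_prod w n f j).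
Proof.
  induction n; simpl; auto. rewrite IHn.
  apply functional_extensionality. intros. unfold jet_dsq. ring.
Qed.

Lemma jet_prod_minus w n f g :
  jet_prod w n (fun j => Cminus (f j) (g j)) = fun j => Cminus (jet_prod w n f j) (jet_prod w n g j).
Proof.
  induction n; simpl; auto. rewrite IHn.
  apply functional_extensionality. intros. unfold jet_dsq. ring.
Qed.

Lemma jet_prod_Csum w n N (F : nat -> nat -> C) :
  jet_prod w n (fun j => Csum N (fun i => F i j)) = fun j => Csum N (fun i => jet_prod w n (F i) j).
Proof.
  induction n; simpl; auto. rewrite IHn.
  apply functional_extensionality. intros j. unfold jet_dsq.
  rewrite <- Csum_mult_l, <- Csum_minus. reflexivity.
Qed.

(* [coef_mul_lin w r n] lists the coefficients of [(X - w) R(X)], where [R] has coefficients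
   [r 0, ..., r n]. *)
Definition coef_mul_lin (w : C) (r : nat -> C) (n : nat) : nat -> C :=
  fun m => Cminus (match m with O => RtoC 0 | S m' => r m' end)
                  (Cmult w (if Nat.leb m n then r m else RtoC 0)).

Lemma jet_dsq_coef w r n (f h : nat -> C) :
  (forall j, h j = Csum (S n) (fun m => Cmult (r m) (f (j + 2 * m)%nat))) ->
  forall j, jet_dsq w h j = Csum (S (S n)) (fun m => Cmult (coef_mul_lin w r n m) (f (j + 2 * m)%nat)).
Proof.
  intros H j. unfold jet_dsq, coef_mul_lin. rewrite !H.
  transitivity (Cminus
    (Csum (S (S n)) (fun m => Cmult (match m with O => RtoC 0 | S m' => r m' end) (f (j + 2 * m)%nat)))
    (Cmult w (Csum (S (S n)) (fun m => Cmult (if Nat.leb m n then r m else RtoC 0) (f (j + 2 * m)%nat))))).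
  2: { rewrite <- Csum_mult_l, <- Csum_minus. apply Csum_ext. intros; ring. }
  f_equal.
  - symmetry. rewrite Csum_S_l, Cmult_0_l, Cplus_0_l. apply Csum_ext. intros m _.
    f_equal. f_equal. lia.
  - f_equal. symmetry. rewrite Csum_S_r. rewrite (proj2 (Nat.leb_gt (S n) n)), Cmult_0_l, Cplus_0_r by lia.
    apply Csum_ext. intros m Hm. rewrite (proj2 (Nat.leb_le m n)) by lia. reflexivity.
Qed.

(* Coefficients of [prod_{i < n} (X - w i)] and of the same product with the factor [i] left out. *)
Fixpoint prod_coef (w : nat -> C) (n : nat) : nat -> C :=
  match n with
  | O => fun m => if Nat.eqb m O then RtoC 1 else RtoC 0
  | S n' => coef_mul_lin (w n') (prod_coef w n') n'
  end.

Fixpoint prod_skip_coef (w : nat -> C) (i n : nat) : nat -> C :=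
  match n with
  | O => fun m => if Nat.eqb m O then RtoC 1 else RtoC 0
  | S n' => if Nat.eqb n' i then (fun m => if Nat.leb m n' then prod_skip_coef w i n' m else RtoC 0)
            else coef_mul_lin (w n') (prod_skip_coef w i n') n'
  end.

Lemma prod_coef_top w n : prod_coef w n n = RtoC 1.
Proof.
  induction n; simpl; auto. unfold coef_mul_lin. rewrite IHn, (proj2 (Nat.leb_gt (S n) n)) by lia. ring.
Qed.

Lemma jet_prod_coef w n f j :
  jet_prod w n f j = Csum (S n) (fun m => Cmult (prod_coef w n m) (f (j + 2 * m)%nat)).
Proof.
  revert j. induction n; intros j.
  - simpl. rewrite Nat.add_0_r. ring.
  - simpl. apply jet_dsq_coef. auto.
Qed.

Lemma jet_prod_skip_coef w i n f j :
  jet_prod_skip w i n f j = Csum (S n) (fun m => Cmult (prod_skip_coef w i n m) (f (j + 2 * m)%nat)).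
Proof.
  revert j. induction n; intros j.
  - simpl. rewrite Nat.add_0_r. ring.
  - cbn [jet_prod_skip prod_skip_coef]. destruct (Nat.eqb n i).
    + rewrite IHn, (Csum_S_r (S n)). rewrite (proj2 (Nat.leb_gt (S n) n)), Cmult_0_l, Cplus_0_r by lia.
      apply Csum_ext. intros m Hm. rewrite (proj2 (Nat.leb_le m n)) by lia. reflexivity.
    + apply jet_dsq_coef. auto.
Qed.

(** * Existence of [zeta] and [beta] *)

(* Extends a function continuous on [-1,1] to a continuous function on the real line. *)
Definition clamp (x : R) : R := Rmax (-1) (Rmin 1 x).

Lemma clamp_I11 x : I11 (clamp x).
Proof. unfold clamp, I11, Rmax, Rmin. repeat destruct Rle_dec; lra. Qed.

Lemma clamp_id x : I11 x -> clamp x = x.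
Proof. unfold clamp, I11, Rmax, Rmin. intros. repeat destruct Rle_dec; lra. Qed.

Lemma clamp_lipschitz x y : Rabs (clamp x - clamp y) <= Rabs (x - y).
Proof. unfold clamp, Rmax, Rmin. repeat destruct Rle_dec; unfold Rabs; repeat destruct Rcase_abs; lra. Qed.

Lemma continuous_comp_clamp (g : R -> C) :
  (forall x, I11 x -> filterlim g (punctured_within I11 x) (locally (g x))) ->
  forall y, continuous (fun z => g (clamp z)) y.
Proof.
  intros H y P HP. assert (Hx := clamp_I11 y).
  specialize (H _ Hx P HP). unfold filtermap, punctured_within, within in H.
  apply locally_singleton in HP. destruct H as [d Hd]. exists d. intros z Hz.
  destruct (Req_dec (clamp z) (clamp y)) as [E|E].
  - unfold filtermap. rewrite E. exact HP.
  - apply Hd; [| split; [apply clamp_I11 | exact E]].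
    change (Rabs (clamp z - clamp y) < d). eapply Rle_lt_trans; [apply clamp_lipschitz | exact Hz].
Qed.

Lemma is_deriv_in_Csum S N (F G : nat -> R -> C) :
  (forall i, (i < N)%nat -> is_deriv_in S (F i) (G i)) ->
  is_deriv_in S (fun x => Csum N (fun i => F i x)) (fun x => Csum N (fun i => G i x)).
Proof.
  induction N; intros H; simpl.
  - apply is_deriv_in_const.
  - apply is_deriv_in_plus; auto.
Qed.

Definition delay_factor (alpha tau0 : R) (lam : C) : C :=
  Cmult (Cplus lam (RtoC alpha)) (Cexp (Cmult lam (RtoC tau0))).

Definition wavenum (mu : nat -> C) (lam : C) (i : nat) : C := Cplus lam (mu i).

Definition wavenum_sq (mu : nat -> C) (lam : C) (i : nat) : C :=
  Cmult (wavenum mu lam i) (wavenum mu lam i).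

Definition zeta_of (N : nat) (mu : nat -> C) (lam : C) : nat -> C := prod_coef (wavenum_sq mu lam) N.

Definition beta_of (N : nat) (alpha tau0 : R) (c mu : nat -> C) (lam : C) : nat -> C :=
  fun m => Cplus (Cmult (delay_factor alpha tau0 lam) (prod_coef (wavenum_sq mu lam) N m))
    (Csum N (fun i => Cmult (Cmult (c i) (Cmult (RtoC 2) (wavenum mu lam i)))
                            (prod_skip_coef (wavenum_sq mu lam) i N m))).

Definition Delta_derivs (N : nat) (alpha tau0 : R) (c mu : nat -> C) (lam : C)
    (dq : nat -> R -> C) (n : nat) (x : R) : C :=
  Cminus (Cmult (delay_factor alpha tau0 lam) (dq n x))
    (Csum N (fun i => Cmult (c i) (kernel_derivs (wavenum mu lam i) (fun z => dq O (clamp z)) dq n x))).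

Section Existence.
Variables (N : nat) (alpha tau0 : R) (c mu : nat -> C) (lam : C).
Variables (q : R -> C) (dq : nat -> R -> C).
Hypothesis HN : (1 <= N)%nat.
Hypothesis Hq : Cn_on_I (2 * N) q dq.

Lemma continuous_comp_clamp_Cn : forall r, continuous (fun z => dq O (clamp z)) r.
Proof.
  destruct Hq as [_ [Hd _]]. apply continuous_comp_clamp. intros x Hx.
  apply (is_deriv_in_cont I11 (dq O) (dq 1%nat)); [apply Hd; lia | exact Hx].
Qed.

Lemma Delta_derivs_0 x : I11 x ->
  Delta_derivs N alpha tau0 c mu lam dq O x = Defs.Delta N alpha tau0 c mu lam q x.
Proof.
  intros Hx. destruct Hq as [H0 _]. unfold Delta_derivs, Defs.Delta, delay_factor.
  rewrite H0 by auto. f_equal. apply Csum_ext. intros i _. f_equal. symmetry.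
  apply Kop_kernel_val; auto using continuous_comp_clamp_Cn.
  intros r Hr. rewrite clamp_id, H0; auto.
Qed.

Lemma Delta_derivs_chain : deriv_chain (2 * N) (Delta_derivs N alpha tau0 c mu lam dq).
Proof.
  destruct Hq as [H0 [Hd _]]. intros j Hj. apply is_deriv_in_minus.
  - apply is_deriv_in_scal, Hd, Hj.
  - apply is_deriv_in_Csum. intros i _. apply is_deriv_in_scal.
    apply (kernel_derivs_chain _ _ continuous_comp_clamp_Cn (2 * N)); auto.
    intros x Hx. rewrite clamp_id; auto.
Qed.

(* Splitting off the factor [D^2 - k_i^2] from the product turns [K_i q] into [-2 k_i q]. *)
Lemma Delta_derivs_identity x :
  Cplus (Csum N (fun k => Cmult (zeta_of N mu lam k) (Delta_derivs N alpha tau0 c mu lam dq (2 * k)%nat x)))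
        (Delta_derivs N alpha tau0 c mu lam dq (2 * N)%nat x)
  = Csum (S N) (fun k => Cmult (beta_of N alpha tau0 c mu lam k) (dq (2 * k)%nat x)).
Proof.
  set (w := wavenum_sq mu lam). set (E := delay_factor alpha tau0 lam).
  transitivity (jet_prod w N (fun n => Delta_derivs N alpha tau0 c mu lam dq n x) O).
  { rewrite jet_prod_coef, Csum_S_r, prod_coef_top, Cmult_1_l. reflexivity. }
  unfold Delta_derivs. rewrite jet_prod_minus, jet_prod_scal, jet_prod_Csum.
  rewrite (Csum_ext N _ (fun i => Cmult (c i) (Csum (S N) (fun m => Cmult (prod_skip_coef w i N m)
                 (Cmult (Copp (Cmult (RtoC 2) (wavenum mu lam i))) (dq (2 * m)%nat x)))))).
  2: { intros i Hi. rewrite jet_prod_scal, (jet_prod_split w i N), jet_prod_skip_coef by auto.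
       f_equal. apply Csum_ext. intros m _. f_equal. unfold jet_dsq, w, wavenum_sq. simpl. ring. }
  rewrite jet_prod_coef. unfold beta_of. fold w E. symmetry.
  rewrite (Csum_ext (S N) _ (fun m => Cplus (Cmult E (Cmult (prod_coef w N m) (dq (2 * m)%nat x)))
     (Csum N (fun i => Cmult (Cmult (Cmult (c i) (Cmult (RtoC 2) (wavenum mu lam i)))
                                    (prod_skip_coef w i N m)) (dq (2 * m)%nat x)))))
    by (intros m _; cbv beta; rewrite Cmult_plus_distr_r, <- Csum_mult_r;
        f_equal; try ring; apply Csum_ext; intros; ring).
  rewrite Csum_plus, Csum_mult_l, Csum_swap. unfold Cminus. f_equal.
  rewrite <- Csum_opp. apply Csum_ext. intros i _.
  rewrite <- Csum_mult_l, <- Csum_opp. apply Csum_ext. intros m _. ring.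
Qed.

End Existence.

Lemma op_identity_of N alpha tau0 c mu lam : (1 <= N)%nat ->
  op_identity N alpha tau0 c mu lam (zeta_of N mu lam) (beta_of N alpha tau0 c mu lam).
Proof.
  intros HN q dq Hq. exists (Delta_derivs N alpha tau0 c mu lam dq).
  split; [|split].
  - intros x Hx. apply (Delta_derivs_0 N alpha tau0 c mu lam q dq); auto.
  - apply (Delta_derivs_chain N alpha tau0 c mu lam q dq); auto.
  - intros x _. apply Delta_derivs_identity.
Qed.

(** * Uniqueness *)

Lemma punctured_within_I11_proper x : I11 x -> ProperFilter' (punctured_within I11 x).
Proof.
  intros [Hx1 Hx2]. constructor; [| apply punctured_within_filter].
  unfold punctured_within, within. intros [d Hd].
  set (e := Rmin (d / 2) 1).
  assert (Hd0 := cond_pos d).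
  assert (He : 0 < e) by (apply Rmin_pos; lra).
  assert (e <= d / 2) by apply Rmin_l. assert (e <= 1) by apply Rmin_r.
  destruct (Rle_dec x 0).
  - apply (Hd (x + e)); [change (Rabs (x + e - x) < d); rewrite Rabs_right; lra | split; [split|]; lra].
  - apply (Hd (x - e)); [change (Rabs (x - e - x) < d); rewrite Rabs_left; lra | split; [split|]; lra].
Qed.

Lemma is_deriv_in_I11_unique f g1 g2 :
  is_deriv_in I11 f g1 -> is_deriv_in I11 f g2 -> forall x, I11 x -> g1 x = g2 x.
Proof.
  intros H1 H2 x Hx.
  exact (@filterlim_locally_unique _ R_AbsRing C_R_NormedModule _
           (punctured_within_I11_proper x Hx) (diff_quot f x) _ _ (H1 x Hx) (H2 x Hx)).
Qed.

Lemma deriv_chain_unique M (d1 d2 : nat -> R -> C) :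
  deriv_chain M d1 -> deriv_chain M d2 -> (forall x, I11 x -> d1 O x = d2 O x) ->
  forall n, (n <= M)%nat -> forall x, I11 x -> d1 n x = d2 n x.
Proof.
  intros H1 H2 H0 n. induction n; intros Hn; auto.
  apply (is_deriv_in_I11_unique (d1 n)); [apply H1; lia|].
  apply (is_deriv_in_ext I11 (d2 n) (d1 n) (d2 (S n)) (d2 (S n))); [| reflexivity | apply H2; lia].
  intros y Hy. symmetry. apply IHn; auto. lia.
Qed.

Section Difference.
Variables (N : nat) (alpha tau0 : R) (c mu : nat -> C) (lam : C) (zeta beta : nat -> C).
Hypothesis HN : (1 <= N)%nat.
Hypothesis Hop : op_identity N alpha tau0 c mu lam zeta beta.

Lemma op_identity_Delta_derivs q dq : Cn_on_I (2 * N) q dq -> forall x, I11 x ->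
  Cplus (Csum N (fun k => Cmult (zeta k) (Delta_derivs N alpha tau0 c mu lam dq (2 * k)%nat x)))
        (Delta_derivs N alpha tau0 c mu lam dq (2 * N)%nat x)
  = Csum (S N) (fun k => Cmult (beta k) (dq (2 * k)%nat x)).
Proof.
  intros Hq x Hx. destruct (Hop q dq Hq) as [dD [H0 [Hc Hi]]].
  assert (E : forall n, (n <= 2 * N)%nat -> dD n x = Delta_derivs N alpha tau0 c mu lam dq n x).
  { intros n Hn. apply (deriv_chain_unique (2 * N)); auto.
    - apply (Delta_derivs_chain N alpha tau0 c mu lam q dq); auto.
    - intros y Hy. rewrite H0 by auto. symmetry. apply (Delta_derivs_0 N alpha tau0 c mu lam q dq); auto. }
  rewrite <- Hi by auto. rewrite E by lia. f_equal.
  apply Csum_ext. intros m Hm. rewrite E by lia. reflexivity.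
Qed.

Lemma op_identity_diff q dq : Cn_on_I (2 * N) q dq -> forall x, I11 x ->
  Csum N (fun m => Cmult (Cminus (zeta_of N mu lam m) (zeta m))
                         (Delta_derivs N alpha tau0 c mu lam dq (2 * m)%nat x))
  = Csum (S N) (fun m => Cmult (Cminus (beta_of N alpha tau0 c mu lam m) (beta m)) (dq (2 * m)%nat x)).
Proof.
  intros Hq x Hx.
  rewrite !Csum_mult_minus_l, <- (Delta_derivs_identity N alpha tau0 c mu lam dq x),
          <- (op_identity_Delta_derivs q dq Hq x Hx). ring.
Qed.

End Difference.

Definition expC_derivs (s : C) (j : nat) (x : R) : C := Cmult (Cpow s j) (expC s x).

Lemma Cn_on_I_expC M s : Cn_on_I M (expC s) (expC_derivs s).
Proof.
  split; [| split].
  - intros x _. unfold expC_derivs. simpl. ring.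
  - intros j _.
    eapply is_deriv_in_ext; [intros y _; reflexivity | | apply is_deriv_in_scal, is_deriv_in_expC].
    intros y _. unfold expC_derivs. simpl. ring.
  - intros x _ P HP. apply (continuous_Cmult (fun _ => Cpow s M) (expC s) x) in HP;
      [| apply filterlim_const | apply continuous_expC].
    unfold filtermap, within in *. revert HP. apply filter_imp. auto.
Qed.

(* [kernel_rem k s m] is the coefficient of [e^{sx}] in the [2m]-th derivative of [K e^{s.}]. *)
Fixpoint kernel_rem (k s : C) (m : nat) : C :=
  match m with
  | O => RtoC 0
  | S m' => Cminus (Cmult (Cmult k k) (kernel_rem k s m')) (Cmult (Cmult (RtoC 2) k) (Cpow s (2 * m')))
  end.

Lemma kernel_derivs_expC_even k s qh m x :
  kernel_derivs k qh (expC_derivs s) (2 * m) x =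
  Cplus (Cmult (Cpow (Cmult k k) m) (kernel_val k qh x)) (Cmult (kernel_rem k s m) (expC s x)).
Proof.
  induction m as [|m IH]; [simpl; ring|].
  replace (2 * S m)%nat with (S (S (2 * m))) by lia. cbn [kernel_derivs]. rewrite IH.
  unfold expC_derivs. simpl. ring.
Qed.

Lemma Delta_derivs_expC_even N alpha tau0 c mu lam s m x : I11 x ->
  Delta_derivs N alpha tau0 c mu lam (expC_derivs s) (2 * m) x =
  Cminus (Cmult (Cminus (Cmult (delay_factor alpha tau0 lam) (Cpow s (2 * m)))
                        (Csum N (fun i => Cmult (c i) (kernel_rem (wavenum mu lam i) s m))))
                (expC s x))
         (Csum N (fun i => Cmult (c i) (Cmult (Cpow (wavenum_sq mu lam i) m)
                                              (Kop (wavenum mu lam i) (expC s) x)))).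
Proof.
  intros Hx. unfold Delta_derivs.
  rewrite (Csum_ext N _ (fun i => Cplus (Cmult (c i) (Cmult (Cpow (wavenum_sq mu lam i) m)
                                                            (Kop (wavenum mu lam i) (expC s) x)))
                                        (Cmult (Cmult (c i) (kernel_rem (wavenum mu lam i) s m))
                                               (expC s x)))).
  - rewrite Csum_plus, Csum_mult_r. unfold expC_derivs at 1. ring.
  - intros i _. rewrite kernel_derivs_expC_even.
    rewrite (Kop_kernel_val _ (expC s) (fun z => expC_derivs s O (clamp z)) x); [| | | exact Hx].
    + unfold wavenum_sq. ring.
    + intros r Hr. unfold expC_derivs. rewrite clamp_id by exact Hr. simpl. ring.
    + apply continuous_comp_clamp_Cn with (N := 1%nat) (q := expC s); [lia | apply Cn_on_I_expC].
Qed.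

Lemma zeta_diff_Kop_expC N alpha tau0 c mu lam zeta beta s :
  (1 <= N)%nat -> op_identity N alpha tau0 c mu lam zeta beta ->
  exists G, forall x, I11 x ->
    Csum N (fun i => Cmult (Cmult (c i) (Csum N (fun m => Cmult (Cminus (zeta_of N mu lam m) (zeta m))
                                                                (Cpow (wavenum_sq mu lam i) m))))
                           (Kop (wavenum mu lam i) (expC s) x))
    = Cmult G (expC s x).
Proof.
  intros HN Hop.
  set (D := fun m => Cminus (zeta_of N mu lam m) (zeta m)).
  set (b := fun m => Cminus (beta_of N alpha tau0 c mu lam m) (beta m)).
  set (g := fun m => Cminus (Cmult (delay_factor alpha tau0 lam) (Cpow s (2 * m)))
                            (Csum N (fun i => Cmult (c i) (kernel_rem (wavenum mu lam i) s m)))).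
  exists (Cminus (Csum N (fun m => Cmult (D m) (g m)))
                 (Csum (S N) (fun m => Cmult (b m) (Cpow s (2 * m))))).
  intros x Hx. set (X := expC s x).
  assert (HA := op_identity_diff N alpha tau0 c mu lam zeta beta HN Hop _ _ (Cn_on_I_expC _ s) x Hx).
  rewrite (Csum_ext N _ (fun m => Cmult (D m) (Cminus (Cmult (g m) X)
             (Csum N (fun i => Cmult (c i) (Cmult (Cpow (wavenum_sq mu lam i) m)
                                                  (Kop (wavenum mu lam i) (expC s) x)))))))
    in HA by (intros m _; rewrite Delta_derivs_expC_even by exact Hx; reflexivity).
  rewrite (Csum_ext N _ (fun m => Cminus (Cmult (Cmult (D m) (g m)) X)
             (Csum N (fun i => Cmult (D m) (Cmult (c i) (Cmult (Cpow (wavenum_sq mu lam i) m)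
                                                          (Kop (wavenum mu lam i) (expC s) x)))))))
    in HA by (intros m _; rewrite Csum_mult_l; ring).
  rewrite (Csum_ext (S N) _ (fun m => Cmult (Cmult (b m) (Cpow s (2 * m))) X)) in HA
    by (intros m _; unfold expC_derivs, b; fold X; ring).
  rewrite Csum_minus, Csum_swap, !Csum_mult_r in HA.
  rewrite (Csum_ext N _ (fun i => Csum N (fun m => Cmult (D m) (Cmult (c i)
             (Cmult (Cpow (wavenum_sq mu lam i) m) (Kop (wavenum mu lam i) (expC s) x))))))
    by (intros i _; rewrite <- Csum_mult_l, <- Csum_mult_r; apply Csum_ext; intros; unfold D; ring).
  match type of HA with Cminus ?AX ?K = _ =>
    transitivity (Cminus AX (Cminus AX K)); [ring | rewrite HA; ring] end.
Qed.

(** * Linear independence of exponentials *)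

Lemma finite_upper_bound (f : nat -> R) n : exists B, 0 < B /\ forall i, (i < n)%nat -> f i < B.
Proof.
  induction n as [|n [B [HB H]]]; [exists 1; split; [lra | intros; lia]|].
  exists (Rmax B (f n + 1)). split; [apply Rlt_le_trans with B; [exact HB | apply Rmax_l]|].
  intros i Hi. destruct (Nat.eq_dec i n) as [->|].
  - apply Rlt_le_trans with (f n + 1); [lra | apply Rmax_r].
  - apply Rlt_le_trans with B; [apply H; lia | apply Rmax_l].
Qed.

(* Sampling at the points [-1 + n h], [n < M], gives a Vandermonde system in the [e^{f_t h}],
   which are distinct once [h] is small. *)
Lemma expC_lin_indep M (W f : nat -> C) :
  (forall t t', (t < M)%nat -> (t' < M)%nat -> t <> t' -> f t <> f t') ->
  (forall x, I11 x -> Csum M (fun t => Cmult (W t) (expC (f t) x)) = RtoC 0) ->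
  forall t, (t < M)%nat -> W t = RtoC 0.
Proof.
  intros Hf HW t Ht.
  destruct (finite_upper_bound (fun t => Cmod (f t)) M) as [B [HB0 HB]].
  assert (HM := pos_INR M). assert (Hpi := PI2_1).
  set (h := / (INR M + 2 * B)).
  assert (Hh : 0 < h) by (apply Rinv_0_lt_compat; lra).
  assert (Hh1 : h * INR M + 2 * B * h = 1) by (unfold h; field; lra).
  apply (Cmult_integral_r (expC (f t) (-1))); [| apply expC_neq_0]. rewrite Cmult_comm. revert t Ht.
  apply (power_sums_zero M (fun t => Cmult (W t) (expC (f t) (-1))) (fun t => expC (f t) h)).
  - intros u u' Hu Hu' Hne E. apply (Hf u u' Hu Hu' Hne), (expC_inj_at _ _ h Hh); [| exact E].
    assert (Cmod (Cminus (f u) (f u')) <= 2 * B).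
    { unfold Cminus. eapply Rle_trans; [apply Cmod_triangle|]. rewrite Cmod_opp.
      assert (G1 := HB u Hu). assert (G2 := HB u' Hu'). lra. }
    assert (Cmod (Cminus (f u) (f u')) * h <= 2 * B * h) by (apply Rmult_le_compat_r; lra).
    assert (0 <= h * INR M) by (apply Rmult_le_pos; lra). lra.
  - intros n Hn. rewrite <- (HW (-1 + INR n * h)).
    + apply Csum_ext. intros u _. rewrite expC_plus_r, expC_pow. ring.
    + assert (INR n <= INR M) by (apply le_INR; lia).
      assert (0 <= INR n * h) by (apply Rmult_le_pos; [apply pos_INR | lra]).
      assert (INR n * h <= h * INR M) by (rewrite Rmult_comm; apply Rmult_le_compat_l; lra).
      assert (0 <= B * h) by (apply Rmult_le_pos; lra).
      unfold I11. lra.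
Qed.

Definition blocks (N : nat) (f g : nat -> C) (z : C) (t : nat) : C :=
  if Nat.ltb t N then f t else if Nat.ltb t (N + N) then g (t - N)%nat else z.

Lemma Csum_blocks N f g z :
  Csum (S (N + N)) (blocks N f g z) = Cplus (Cplus (Csum N f) (Csum N g)) z.
Proof.
  rewrite Csum_S_r, Csum_add. unfold blocks.
  rewrite (proj2 (Nat.ltb_ge (N + N) N)), (proj2 (Nat.ltb_ge (N + N) (N + N))) by lia.
  f_equal. f_equal; apply Csum_ext; intros t Ht.
  - rewrite (proj2 (Nat.ltb_lt t N)) by lia. reflexivity.
  - rewrite (proj2 (Nat.ltb_ge (N + t) N)), (proj2 (Nat.ltb_lt (N + t) (N + N))) by lia.
    f_equal. lia.
Qed.

Lemma blocks_mult N f g z f' g' z' t :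
  Cmult (blocks N f g z t) (blocks N f' g' z' t) =
  blocks N (fun i => Cmult (f i) (f' i)) (fun i => Cmult (g i) (g' i)) (Cmult z z') t.
Proof. unfold blocks. destruct (Nat.ltb t N), (Nat.ltb t (N + N)); reflexivity. Qed.

Lemma Cmod_lt_neq z r : Cmod z < r -> z <> RtoC r.
Proof. intros H ->. rewrite Cmod_R in H. assert (r <= Rabs r) by apply Rle_abs. lra. Qed.

Lemma Csqr_neq a b : Cmult a a <> Cmult b b -> a <> b /\ a <> Copp b.
Proof. intros H. split; intros ->; apply H; ring. Qed.

Lemma Copp_neq_self k : k <> RtoC 0 -> k <> Copp k.
Proof.
  intros H E. apply H. replace k with (Cmult (RtoC (/ 2)) (Cplus k k)).
  - rewrite E at 2. ring.
  - rewrite <- (Cmult_1_l k) at 3. replace (RtoC 1) with (Cmult (RtoC (/ 2)) (RtoC 2)); [ring|].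
    rewrite <- RtoC_mult. f_equal. field.
Qed.

(* The exponents of [K_i e^{s.}]: the [k_i], then the [-k_i] (a dummy [2s] when [k_i = 0],
   where [e^{k_i x} = e^{-k_i x}]), then [s]. *)
Definition Kop_expC_rates (N : nat) (k : nat -> C) (s : R) : nat -> C :=
  blocks N k (fun i => if Ceq_dec (k i) (RtoC 0) then RtoC (2 * s) else Copp (k i)) (RtoC s).

Lemma Kop_expC_rates_lt N k s t t' : 0 < s ->
  (forall i j, (i < N)%nat -> (j < N)%nat -> i <> j -> Cmult (k i) (k i) <> Cmult (k j) (k j)) ->
  (forall i, (i < N)%nat -> Cmod (k i) < s) ->
  (t < t' < S (N + N))%nat -> Kop_expC_rates N k s t <> Kop_expC_rates N k s t'.
Proof.
  intros Hs Hsq Hm Ht. unfold Kop_expC_rates, blocks.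
  assert (Hopp : forall i, (i < N)%nat -> Copp (k i) <> RtoC s /\ Copp (k i) <> RtoC (2 * s))
    by (intros i Hi; split; apply Cmod_lt_neq; rewrite Cmod_opp; specialize (Hm i Hi); lra).
  assert (Hk : forall i, (i < N)%nat -> k i <> RtoC s /\ k i <> RtoC (2 * s))
    by (intros i Hi; split; apply Cmod_lt_neq; specialize (Hm i Hi); lra).
  destruct (Nat.ltb_spec t N), (Nat.ltb_spec t' N), (Nat.ltb_spec t (N + N)), (Nat.ltb_spec t' (N + N));
    try lia.
  - apply Csqr_neq, Hsq; lia.
  - destruct (Ceq_dec (k (t' - N)%nat) (RtoC 0)); [apply Hk; lia|].
    destruct (Nat.eq_dec t (t' - N)) as [->|]; [apply Copp_neq_self; auto | apply Csqr_neq, Hsq; lia].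
  - apply Hk. lia.
  - destruct (Ceq_dec (k (t - N)%nat) (RtoC 0)), (Ceq_dec (k (t' - N)%nat) (RtoC 0)).
    + exfalso. apply (Hsq (t - N) (t' - N))%nat; try lia. congruence.
    + intros E. apply (proj2 (Hopp (t' - N)%nat ltac:(lia))). auto.
    + apply Hopp. lia.
    + intros E. apply (proj1 (Csqr_neq _ _ (Hsq (t - N) (t' - N) ltac:(lia) ltac:(lia) ltac:(lia))))%nat.
      replace (k (t - N)%nat) with (Copp (Copp (k (t - N)%nat))) by ring. rewrite E. ring.
  - destruct (Ceq_dec (k (t - N)%nat) (RtoC 0)); [intros E; injection E; lra | apply Hopp; lia].
Qed.

Lemma Kop_expC_rates_inj N k s : 0 < s ->
  (forall i j, (i < N)%nat -> (j < N)%nat -> i <> j -> Cmult (k i) (k i) <> Cmult (k j) (k j)) ->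
  (forall i, (i < N)%nat -> Cmod (k i) < s) ->
  forall t t', (t < S (N + N))%nat -> (t' < S (N + N))%nat -> t <> t' ->
  Kop_expC_rates N k s t <> Kop_expC_rates N k s t'.
Proof.
  intros Hs Hsq Hm t t' Ht Ht' Hne.
  destruct (Nat.lt_total t t') as [H|[H|H]]; [| lia |].
  - apply Kop_expC_rates_lt; auto.
  - apply not_eq_sym, Kop_expC_rates_lt; auto.
Qed.

Lemma blocks_comp (F : C -> C) N f g z t :
  F (blocks N f g z t) = blocks N (fun i => F (f i)) (fun i => F (g i)) (F z) t.
Proof. unfold blocks. destruct (Nat.ltb t N), (Nat.ltb t (N + N)); reflexivity. Qed.

Lemma Cinv_neq_0 z : z <> RtoC 0 -> Cinv z <> RtoC 0.
Proof. intros Hz E. assert (H := Cinv_r z Hz). rewrite E, Cmult_0_r in H. injection H. lra. Qed.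

Lemma expC_RtoC_neq s : 0 < s -> expC (RtoC s) 1 <> expC (RtoC s) (-1).
Proof.
  intros Hs E. rewrite !expC_components in E. simpl in E. injection E as E _.
  rewrite !Rmult_0_l, cos_0, !Rmult_1_r in E. apply exp_inv in E. lra.
Qed.

Lemma Kop_expC_coef_k_neq_0 k s : Cminus s k <> RtoC 0 -> Kop_expC_coef_k k s <> RtoC 0.
Proof. intros H. apply Cmult_neq_0; [apply expC_neq_0 | apply Cinv_neq_0, H]. Qed.

(* For [k = 0] the rates [k] and [-k] coincide and the two coefficients must be added. *)
Lemma Kop_expC_coef_0_neq_0 s : 0 < s ->
  Cplus (Kop_expC_coef_k (RtoC 0) (RtoC s)) (Kop_expC_coef_mk (RtoC 0) (RtoC s)) <> RtoC 0.
Proof.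
  intros Hs Z. apply (expC_RtoC_neq s Hs). unfold Kop_expC_coef_k, Kop_expC_coef_mk in Z.
  assert (HS : RtoC s <> RtoC 0) by (intros E; injection E; lra).
  replace (Cminus (RtoC s) (RtoC 0)) with (RtoC s) in Z by ring.
  replace (Cplus (RtoC 0) (RtoC s)) with (RtoC s) in Z by ring.
  apply Ceq_minus. rewrite <- (Cmult_0_r (RtoC s)), <- Z. field. exact HS.
Qed.

(* By [Kop_expC], [sum_i a_i K_i e^{s.} - G e^{s.}] is a combination of the exponentials with
   rates [Kop_expC_rates], whose coefficient on [e^{k_i x}] is a nonzero multiple of [a_i]. *)
Lemma Kop_expC_lin_indep N (k a : nat -> C) (s : R) (G : C) :
  0 < s ->
  (forall i j, (i < N)%nat -> (j < N)%nat -> i <> j -> Cmult (k i) (k i) <> Cmult (k j) (k j)) ->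
  (forall i, (i < N)%nat -> Cmod (k i) < s) ->
  (forall x, I11 x ->
     Csum N (fun i => Cmult (a i) (Kop (k i) (expC (RtoC s)) x)) = Cmult G (expC (RtoC s) x)) ->
  forall i, (i < N)%nat -> a i = RtoC 0.
Proof.
  intros Hs Hsq Hm HK.
  set (S0 := RtoC s).
  set (uu := fun i => Kop_expC_coef_k (k i) S0). set (vv := fun i => Kop_expC_coef_mk (k i) S0).
  assert (Hp : forall i, (i < N)%nat -> Cplus (k i) S0 <> RtoC 0).
  { intros i Hi E. apply (Cmod_lt_neq (Copp (k i)) s); [rewrite Cmod_opp; auto |].
    replace (Copp (k i)) with (Cminus S0 (Cplus (k i) S0)) by ring. rewrite E. unfold S0. ring. }
  assert (Hn : forall i, (i < N)%nat -> Cminus S0 (k i) <> RtoC 0).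
  { intros i Hi E. apply (Cmod_lt_neq (k i) s); [auto |].
    replace (k i) with (Cminus S0 (Cminus S0 (k i))) by ring. rewrite E. unfold S0. ring. }
  set (W1 := fun i =>
    Cplus (Cmult (a i) (uu i)) (if Ceq_dec (k i) (RtoC 0) then Cmult (a i) (vv i) else RtoC 0)).
  set (W2 := fun i => if Ceq_dec (k i) (RtoC 0) then RtoC 0 else Cmult (a i) (vv i)).
  set (W3 := Cminus (Csum N (fun i => Cmult (a i) (Kop_expC_coef_s (k i) S0))) G).
  assert (HW : forall t, (t < S (N + N))%nat -> blocks N W1 W2 W3 t = RtoC 0).
  { apply (expC_lin_indep _ _ (Kop_expC_rates N k s)); [apply Kop_expC_rates_inj; auto|].
    intros x Hx. unfold Kop_expC_rates.
    rewrite (Csum_ext _ _ (fun t => blocks N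
      (fun i => Cmult (W1 i) (expC (k i) x))
      (fun i => Cmult (W2 i) (expC (if Ceq_dec (k i) (RtoC 0) then RtoC (2 * s) else Copp (k i)) x))
      (Cmult W3 (expC S0 x)) t))
      by (intros t _; rewrite (blocks_comp (fun z => expC z x)), blocks_mult; reflexivity).
    rewrite Csum_blocks, <- Csum_plus.
    rewrite (Csum_ext N _ (fun i => Cminus (Cmult (a i) (Kop (k i) (expC S0) x))
                                           (Cmult (Cmult (a i) (Kop_expC_coef_s (k i) S0)) (expC S0 x)))).
    - rewrite Csum_minus, HK, Csum_mult_r by exact Hx. unfold W3, S0. ring.
    - intros i Hi. rewrite Kop_expC by auto. unfold W1, W2, uu, vv.
      destruct (Ceq_dec (k i) (RtoC 0)) as [E|E]; [| ring].
      rewrite E. replace (Copp (RtoC 0)) with (RtoC 0) by ring. ring. }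
  intros i Hi. specialize (HW i ltac:(lia)). unfold blocks in HW.
  rewrite (proj2 (Nat.ltb_lt i N)) in HW by lia. unfold W1 in HW.
  destruct (Ceq_dec (k i) (RtoC 0)) as [E|E].
  - apply (Cmult_integral_r (Cplus (uu i) (vv i))); [rewrite <- HW; ring |].
    unfold uu, vv. rewrite E. apply Kop_expC_coef_0_neq_0, Hs.
  - rewrite Cplus_0_r in HW. apply (Cmult_integral_r (uu i)); [rewrite <- HW; ring |].
    apply Kop_expC_coef_k_neq_0, Hn, Hi.
Qed.

Lemma zeta_unique N alpha tau0 c mu lam zeta beta :
  (1 <= N)%nat -> (forall i, (i < N)%nat -> c i <> RtoC 0) ->
  (forall i j, (i < N)%nat -> (j < N)%nat -> i <> j -> wavenum_sq mu lam i <> wavenum_sq mu lam j) ->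
  op_identity N alpha tau0 c mu lam zeta beta ->
  forall m, (m < N)%nat -> zeta m = zeta_of N mu lam m.
Proof.
  intros HN Hc Hsq Hop.
  destruct (finite_upper_bound (fun i => Cmod (wavenum mu lam i)) N) as [s [Hs Hk]].
  destruct (zeta_diff_Kop_expC N alpha tau0 c mu lam zeta beta (RtoC s) HN Hop) as [G HG].
  assert (Hroots : forall i, (i < N)%nat ->
    Csum N (fun m => Cmult (Cminus (zeta_of N mu lam m) (zeta m)) (Cpow (wavenum_sq mu lam i) m)) = RtoC 0).
  { intros i Hi. apply (Cmult_integral_r (c i)); [| apply Hc, Hi]. revert i Hi.
    apply (Kop_expC_lin_indep N (wavenum mu lam) _ s G); auto. }
  destruct N as [|M]; [lia|]. intros m Hm. symmetry. apply Ceq_minus.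
  apply (Cpoly_roots_zero M (fun m => Cminus (zeta_of (S M) mu lam m) (zeta m)) (wavenum_sq mu lam));
    [intros; apply Hsq; lia | | lia].
  intros i Hi. apply Hroots. lia.
Qed.

(* With [zeta] known, [q = e^{sx}] at [x = 0] gives [sum_m (beta_of m - beta m) s^{2m} = 0]. *)
Lemma beta_unique N alpha tau0 c mu lam zeta beta :
  (1 <= N)%nat -> op_identity N alpha tau0 c mu lam zeta beta ->
  (forall m, (m < N)%nat -> zeta m = zeta_of N mu lam m) ->
  forall m, (m <= N)%nat -> beta m = beta_of N alpha tau0 c mu lam m.
Proof.
  intros HN Hop Hz m Hm. symmetry. apply Ceq_minus. revert m Hm.
  apply (Cpoly_roots_zero N (fun m => Cminus (beta_of N alpha tau0 c mu lam m) (beta m))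
           (fun t => Cmult (RtoC (INR t + 1)) (RtoC (INR t + 1)))).
  - intros i j _ _ Hij E. apply Hij, INR_eq. rewrite <- !RtoC_mult in E. injection E as E.
    assert (Hi := pos_INR i). assert (Hj := pos_INR j). nra.
  - intros t _. set (st := RtoC (INR t + 1)).
    assert (HA := op_identity_diff N alpha tau0 c mu lam zeta beta HN Hop _ _ (Cn_on_I_expC _ st) 0
                    ltac:(unfold I11; lra)).
    rewrite Csum_zero in HA by (intros m Hm; rewrite Hz by exact Hm; ring).
    unfold Cpoly_eval. rewrite HA. apply Csum_ext. intros m _.
    unfold expC_derivs. rewrite expC_0_r, Cpow_mult_r. simpl (Cpow st 2). rewrite !Cmult_1_r. reflexivity.
Qed.

Theorem lemma3p12 (N : nat) (alpha tau0 : R) (c mu : nat -> C) (lam : C) :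
  (1 <= N)%nat -> 0 < alpha -> 0 <= tau0 ->
  (forall i, (i < N)%nat -> c i <> RtoC 0) ->
  (forall i j, (i < N)%nat -> (j < N)%nat -> i <> j -> mu i <> mu j) ->
  (* lambda not in S *)
  (forall i j, (i < N)%nat -> (j < N)%nat -> i <> j ->
     Cmult (Cplus lam (mu i)) (Cplus lam (mu i))
       <> Cmult (Cplus lam (mu j)) (Cplus lam (mu j))) ->
  exists zeta beta : nat -> C,
    op_identity N alpha tau0 c mu lam zeta beta /\
    forall zeta' beta' : nat -> C,
      op_identity N alpha tau0 c mu lam zeta' beta' ->
      (forall k, (k < N)%nat -> zeta' k = zeta k) /\
      (forall k, (k <= N)%nat -> beta' k = beta k).
Proof.
  intros HN _ _ Hc _ Hsq.
  exists (zeta_of N mu lam), (beta_of N alpha tau0 c mu lam).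
  split; [apply op_identity_of, HN |].
  intros zeta' beta' Hop.
  assert (Hz := zeta_unique N alpha tau0 c mu lam zeta' beta' HN Hc Hsq Hop).
  split; [exact Hz | exact (beta_unique N alpha tau0 c mu lam zeta' beta' HN Hop Hz)].
Qed.
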